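(* There is a universal constant $C>0$ such that the following holds. Let $m\ge2$, $n\ge0$ be integers and $p,q\in[0,1]$ with $mp\ge 64\log m$ and $p\le2/3$. Let $X\sim\mathrm{Binom}(m,p)$ and $Y\sim\mathrm{Binom}(n,q)$ be independent. Then for any $\ell$ with $1\le\ell\le\sqrt{mp\log m}$, \[ \Pr(Y\ge X+\ell)\ge\Pr(Y\ge X)\exp\Big(-C\ell\sqrt{\tfrac{\log m}{mp}}\Big)-2m^{-2}, \] \[ \Pr(Y\ge X-\ell)\le\Pr(Y\ge X)\exp\Big(C\ell\sqrt{\tfrac{\log m}{mp}}\Big)+2m^{-2}. \] *)

From Stdlib Require Import Reals Lra.
Open Scope R_scope.

Definition binom_pmf (n : nat) (p : R) (k : nat) : R :=
  C n k * p ^ k * (1 - p) ^ (n - k).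

(* For X ~ Binom(m,p), Y ~ Binom(n,q) independent (joint law = product of the
   marginals), prob_Y_ge_X_plus m p n q t = Pr(Y >= X + t), t real. *)
Definition prob_Y_ge_X_plus (m : nat) (p : R) (n : nat) (q : R) (t : R) : R :=
  sum_f_R0 (fun i =>
    sum_f_R0 (fun j =>
      if Rle_dec (INR i + t) (INR j)
      then binom_pmf m p i * binom_pmf n q j else 0) n) m.

(* Write P(t) = Σ_i Pr(X = i) Pr(Y >= i + t) and put μ = mp, ε = sqrt(ln m / μ).
   Above T = μ(1 - 5ε) consecutive binomial probabilities grow by a factor at most
   e^{40ε}, so shifting the summation index by an integer L ∈ (ℓ, ℓ + 1] changes the
   sum by a factor at most e^{40εL} <= e^{80ℓε}, up to the mass of X below T + L.
   That point lies at least 3με below the mean, so the Chernoff lower-tail bound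
   makes this mass at most m^{-2}.  Comparing P(0) with P(L), and P(-L) with P(0),
   and using that P is antitone in t gives both inequalities with C = 80. *)

From Stdlib Require Import Reals Lra Lia ZArith.
Open Scope R_scope.

Fixpoint rsum (f : nat -> R) (n : nat) : R :=
  match n with O => 0 | S k => rsum f k + f k end.

Lemma rsum_eq f g n : (forall i, (i < n)%nat -> f i = g i) -> rsum f n = rsum g n.
Proof.
  induction n as [|n IH]; intros Hfg; simpl; [reflexivity|].
  rewrite IH, Hfg; [reflexivity|lia|intros; apply Hfg; lia].
Qed.

Lemma rsum_le f g n : (forall i, (i < n)%nat -> f i <= g i) -> rsum f n <= rsum g n.
Proof.
  induction n as [|n IH]; intros Hfg; simpl; [lra|].
  apply Rplus_le_compat; [apply IH; intros; apply Hfg|apply Hfg]; lia.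
Qed.

Lemma rsum_zero n : rsum (fun _ => 0) n = 0.
Proof. induction n as [|n IH]; simpl; [|rewrite IH]; ring. Qed.

Lemma rsum_nonneg f n : (forall i, (i < n)%nat -> 0 <= f i) -> 0 <= rsum f n.
Proof. intros Hf. rewrite <- (rsum_zero n). apply rsum_le, Hf. Qed.

Lemma rsum_plus f g n : rsum (fun i => f i + g i) n = rsum f n + rsum g n.
Proof. induction n as [|n IH]; simpl; [|rewrite IH]; ring. Qed.

Lemma rsum_scal c f n : rsum (fun i => c * f i) n = c * rsum f n.
Proof. induction n as [|n IH]; simpl; [|rewrite IH]; ring. Qed.

Lemma rsum_split f N L : rsum f (N + L) = rsum f L + rsum (fun k => f (k + L)%nat) N.
Proof. induction N as [|N IH]; simpl; [|rewrite IH]; ring. Qed.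

Lemma rsum_pad f n N : (forall i, (n <= i)%nat -> f i = 0) -> (n <= N)%nat ->
  rsum f N = rsum f n.
Proof.
  intros Hf HN. induction HN as [|N HN IH]; [reflexivity|].
  simpl. rewrite IH, (Hf N HN). ring.
Qed.

Lemma sum_f_R0_rsum f n : sum_f_R0 f n = rsum f (S n).
Proof. induction n as [|n IH]; simpl in *; [|rewrite IH]; ring. Qed.

Lemma exp_pow x n : exp x ^ n = exp (INR n * x).
Proof. rewrite <- Rpower_pow by apply exp_pos. unfold Rpower. rewrite ln_exp. reflexivity. Qed.

Lemma exp_le_mono x y : x <= y -> exp x <= exp y.
Proof. intros [Hxy|Hxy]; [left; apply exp_increasing, Hxy|right; rewrite Hxy; reflexivity]. Qed.

Lemma ratio_bound_iter (a : nat -> R) (r T : R) :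
  0 <= r -> (forall j, T <= INR j -> a (S j) <= r * a j) ->
  forall L j, T <= INR j -> a (j + L)%nat <= r ^ L * a j.
Proof.
  intros Hr Hstep L. induction L as [|L IH]; intros j Hj.
  - rewrite Nat.add_0_r. simpl. lra.
  - rewrite Nat.add_succ_r. simpl pow. rewrite Rmult_assoc.
    eapply Rle_trans; [apply Hstep|apply Rmult_le_compat_l; [exact Hr|apply IH, Hj]].
    rewrite plus_INR. pose proof (pos_INR L). lra.
Qed.

Lemma rsum_shift_le (a w : nat -> R) (r T : R) (L N : nat) :
  0 <= r -> 0 <= T -> (forall i, 0 <= a i) -> (forall i, 0 <= w i <= 1) ->
  (forall j, T <= INR j -> a (j + L)%nat <= r ^ L * a j) ->
  rsum (fun i => a i * w i) (N + L) <=
    r ^ L * rsum (fun k => a k * w (k + L)%nat) N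
    + rsum (fun i => if Rlt_dec (INR i) (T + INR L) then a i else 0) (N + L).
Proof.
  intros Hr HT Ha Hw Hratio.
  set (good := fun i => if Rlt_dec (INR i) (T + INR L) then 0 else a i * w i).
  assert (HrL : 0 <= r ^ L) by (apply pow_le, Hr).
  assert (Hgood : rsum good (N + L) <= r ^ L * rsum (fun k => a k * w (k + L)%nat) N).
  { rewrite rsum_split, (rsum_eq good (fun _ => 0)), rsum_zero, Rplus_0_l, <- rsum_scal.
    - apply rsum_le; intros k _. unfold good. rewrite plus_INR.
      specialize (Ha k). specialize (Hw (k + L)%nat).
      destruct Rlt_dec as [_|Hk].
      + apply Rmult_le_pos; [exact HrL|nra].
      + rewrite <- Rmult_assoc. apply Rmult_le_compat_r; [lra|]. apply Hratio. lra.
    - intros i Hi. apply lt_INR in Hi. unfold good. destruct Rlt_dec; lra. }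
  eapply Rle_trans; [|apply Rplus_le_compat_r, Hgood].
  rewrite <- rsum_plus. apply rsum_le; intros i _. unfold good.
  specialize (Ha i). specialize (Hw i). destruct Rlt_dec; nra.
Qed.

Lemma C_nonneg n k : 0 <= C n k.
Proof.
  unfold C, Rdiv. apply Rmult_le_pos; [apply pos_INR|].
  left. apply Rinv_0_lt_compat, Rmult_lt_0_compat; apply INR_fact_lt_0.
Qed.

Lemma binom_pmf_nonneg n p k : 0 <= p <= 1 -> 0 <= binom_pmf n p k.
Proof.
  intros Hp. unfold binom_pmf.
  apply Rmult_le_pos; [apply Rmult_le_pos; [apply C_nonneg|]|]; apply pow_le; lra.
Qed.

Lemma binom_pmf_sum n p : sum_f_R0 (binom_pmf n p) n = 1.
Proof.
  unfold binom_pmf. rewrite <- binomial. replace (p + (1 - p)) with 1 by ring. apply pow1.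
Qed.

Lemma binom_pmf_succ m p j : (j < m)%nat ->
  binom_pmf m p (S j) * ((INR j + 1) * (1 - p)) = binom_pmf m p j * ((INR m - INR j) * p).
Proof.
  intros Hj. unfold binom_pmf.
  rewrite pascal_step3, minus_INR, S_INR by lia.
  replace (m - j)%nat with (S (m - S j)) by lia.
  change ((1 - p) ^ S (m - S j)) with ((1 - p) * (1 - p) ^ (m - S j)).
  change (p ^ S j) with (p * p ^ j).
  field. pose proof (pos_INR j). lra.
Qed.

(* [binom_pmf m p i] is not zero for [i > m], since [C] uses truncated subtraction. *)
Definition binom_mass (m : nat) (p : R) (i : nat) : R :=
  if Nat.leb i m then binom_pmf m p i else 0.

Lemma binom_mass_in m p i : (i <= m)%nat -> binom_mass m p i = binom_pmf m p i.
Proof. intros Hi. unfold binom_mass. apply Nat.leb_le in Hi. rewrite Hi. reflexivity. Qed.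

Lemma binom_mass_out m p i : (m < i)%nat -> binom_mass m p i = 0.
Proof.
  intros Hi. unfold binom_mass. destruct (Nat.leb_spec i m); [lia|reflexivity].
Qed.

Lemma binom_mass_nonneg m p i : 0 <= p <= 1 -> 0 <= binom_mass m p i.
Proof.
  intros Hp. unfold binom_mass. destruct Nat.leb; [apply binom_pmf_nonneg, Hp|lra].
Qed.

Lemma binom_mass_succ_le m p s r j :
  0 < p <= 2/3 -> 0 < INR m * p -> 0 <= s <= 5/8 * (INR m * p) ->
  INR m * p + 8 * s <= r * (INR m * p) -> INR m * p - s <= INR j ->
  binom_mass m p (S j) <= r * binom_mass m p j.
Proof.
  intros Hp Hmu Hs Hr Hj. set (mu := INR m * p) in *.
  assert (Hr1 : 1 <= r) by (apply Rmult_le_reg_r with mu; lra).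
  destruct (Nat.lt_ge_cases j m) as [Hjm|Hjm].
  2:{ rewrite binom_mass_out by lia.
      apply Rmult_le_pos; [lra|apply binom_mass_nonneg; lra]. }
  rewrite !binom_mass_in by lia.
  (* [mu + 2 s <= r (mu - s)] and [p <= 2 (1 - p)] give the ratio bound. *)
  assert (Hkey : (INR m - INR j) * p <= r * ((INR j + 1) * (1 - p))).
  { assert (Hrs : mu + 2 * s <= r * (mu - s)).
    { apply Rmult_le_reg_r with mu; [lra|].
      assert ((mu + 8 * s) * (mu - s) <= r * mu * (mu - s)) by (apply Rmult_le_compat_r; lra).
      nra. }
    assert (r * (mu - s) * (1 - p) <= r * (INR j + 1) * (1 - p))
      by (apply Rmult_le_compat_r; [|apply Rmult_le_compat_l]; lra).
    assert ((mu + 2 * s) * (1 - p) <= r * (mu - s) * (1 - p)) by (apply Rmult_le_compat_r; lra).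
    unfold mu in *. nra. }
  assert (Hpos : 0 < (INR j + 1) * (1 - p)) by (pose proof (pos_INR j); nra).
  apply Rmult_le_reg_r with ((INR j + 1) * (1 - p)); [exact Hpos|].
  rewrite binom_pmf_succ by exact Hjm.
  pose proof (binom_pmf_nonneg m p j ltac:(lra)).
  replace (r * binom_pmf m p j * ((INR j + 1) * (1 - p)))
    with (binom_pmf m p j * (r * ((INR j + 1) * (1 - p)))) by ring.
  apply Rmult_le_compat_l; assumption.
Qed.

Lemma binom_mgf m p y :
  rsum (fun i => binom_mass m p i * y ^ i) (S m) = (p * y + (1 - p)) ^ m.
Proof.
  rewrite binomial, sum_f_R0_rsum. apply rsum_eq; intros i Hi.
  rewrite binom_mass_in by lia. unfold binom_pmf. rewrite Rpow_mult_distr. ring.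
Qed.

Lemma exp_neg_le_quadratic x : 0 <= x -> exp (- x) <= 1 - x + 3/4 * x ^ 2.
Proof.
  intros Hx.
  assert (Hsq : (1 + x / 2) ^ 2 <= exp x).
  { replace x with (x / 2 + x / 2) at 2 by field. rewrite exp_plus.
    pose proof (exp_ineq1_le (x / 2)). simpl. rewrite Rmult_1_r.
    apply Rmult_le_compat; lra. }
  assert (Hinv : exp (- x) * exp x = 1) by (rewrite <- exp_plus, Rplus_opp_l; apply exp_0).
  assert (Hpoly : 1 <= (1 + x / 2) ^ 2 * (1 - x + 3/4 * x ^ 2)).
  { replace ((1 + x / 2) ^ 2 * (1 - x + 3/4 * x ^ 2)) with (1 + x ^ 3 / 2 + 3/16 * x ^ 4) by field.
    pose proof (pow_le x 3 Hx). pose proof (pow_le x 4 Hx). lra. }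
  pose proof (exp_pos (- x)).
  assert (0 < (1 + x / 2) ^ 2) by nra.
  nra.
Qed.

Definition binom_lower_tail (m : nat) (p x : R) : R :=
  rsum (fun i => if Rlt_dec (INR i) x then binom_mass m p i else 0) (S m).

Lemma binom_lower_tail_le m p d : 0 <= p <= 1 -> 0 < INR m * p -> 0 < d ->
  binom_lower_tail m p (INR m * p - d) <= exp (- d ^ 2 / (3 * (INR m * p))).
Proof.
  intros Hp Hmu Hd. set (mu := INR m * p) in *.
  (* [lam] minimizes the exponent [- lam d + 3/4 mu lam^2] left by [exp_neg_le_quadratic]. *)
  set (lam := 2 * d / (3 * mu)). set (y := exp (- lam)).
  assert (Hlam : 0 < lam) by (unfold lam; apply Rdiv_lt_0_compat; lra).
  assert (Hmarkov : binom_lower_tail m p (mu - d) <= exp (lam * (mu - d)) * (p * y + (1 - p)) ^ m).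
  { rewrite <- binom_mgf, <- rsum_scal. apply rsum_le; intros i _.
    pose proof (binom_mass_nonneg m p i Hp).
    unfold y. rewrite exp_pow.
    assert (0 <= exp (lam * (mu - d)) * exp (INR i * - lam)).
    { apply Rmult_le_pos; left; apply exp_pos. }
    destruct Rlt_dec as [Hi|]; [|nra].
    assert (1 <= exp (lam * (mu - d)) * exp (INR i * - lam)).
    { rewrite <- exp_plus. pose proof (exp_ineq1_le (lam * (mu - d) + INR i * - lam)). nra. }
    nra. }
  assert (Hmgf : (p * y + (1 - p)) ^ m <= exp (- (mu * (1 - y)))).
  { replace (- (mu * (1 - y))) with (INR m * - (p * (1 - y))) by (unfold mu; ring).
    rewrite <- exp_pow. apply pow_incr.
    assert (0 < y) by apply exp_pos.
    pose proof (exp_ineq1_le (- (p * (1 - y)))). split; nra. }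
  assert (Hy : lam - 3/4 * lam ^ 2 <= 1 - y) by (pose proof (exp_neg_le_quadratic lam); unfold y; lra).
  eapply Rle_trans; [exact Hmarkov|].
  eapply Rle_trans; [apply Rmult_le_compat_l; [left; apply exp_pos|exact Hmgf]|].
  rewrite <- exp_plus. apply exp_le_mono.
  replace (- d ^ 2 / (3 * mu)) with (lam * (mu - d) - mu * (lam - 3/4 * lam ^ 2))
    by (unfold lam; field; lra).
  nra.
Qed.

Definition binom_tail (n : nat) (q x : R) : R :=
  sum_f_R0 (fun j => if Rle_dec x (INR j) then binom_pmf n q j else 0) n.

Lemma binom_tail_bounds n q x : 0 <= q <= 1 -> 0 <= binom_tail n q x <= 1.
Proof.
  intros Hq. unfold binom_tail. rewrite <- (binom_pmf_sum n q), !sum_f_R0_rsum. split.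
  - apply rsum_nonneg; intros j _. destruct Rle_dec; [apply binom_pmf_nonneg, Hq|lra].
  - apply rsum_le; intros j _. pose proof (binom_pmf_nonneg n q j Hq). destruct Rle_dec; lra.
Qed.

Lemma prob_Y_ge_X_plus_rsum m p n q t N : (S m <= N)%nat ->
  prob_Y_ge_X_plus m p n q t =
    rsum (fun i => binom_mass m p i * binom_tail n q (INR i + t)) N.
Proof.
  intros HN. unfold prob_Y_ge_X_plus. rewrite sum_f_R0_rsum.
  rewrite (rsum_pad _ (S m) N); [|intros i Hi; rewrite binom_mass_out by lia; ring|exact HN].
  apply rsum_eq; intros i Hi. rewrite binom_mass_in by lia. unfold binom_tail.
  rewrite scal_sum. apply sum_eq; intros j _. destruct Rle_dec; ring.
Qed.

Lemma prob_Y_ge_X_plus_nonneg m p n q t : 0 <= p <= 1 -> 0 <= q <= 1 ->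
  0 <= prob_Y_ge_X_plus m p n q t.
Proof.
  intros Hp Hq. rewrite (prob_Y_ge_X_plus_rsum m p n q t (S m)) by lia.
  apply rsum_nonneg; intros i _. apply Rmult_le_pos.
  - apply binom_mass_nonneg, Hp.
  - apply binom_tail_bounds, Hq.
Qed.

Lemma prob_Y_ge_X_plus_antitone m p n q t t' : 0 <= p <= 1 -> 0 <= q <= 1 -> t <= t' ->
  prob_Y_ge_X_plus m p n q t' <= prob_Y_ge_X_plus m p n q t.
Proof.
  intros Hp Hq Ht. unfold prob_Y_ge_X_plus.
  apply sum_Rle; intros i _. apply sum_Rle; intros j _.
  pose proof (Rmult_le_pos _ _ (binom_pmf_nonneg m p i Hp) (binom_pmf_nonneg n q j Hq)).
  do 2 destruct Rle_dec; lra.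
Qed.

Lemma prob_Y_ge_X_plus_shift_le m p n q t r T L :
  0 <= p <= 1 -> 0 <= q <= 1 -> 0 <= r -> 0 <= T ->
  (forall j, T <= INR j -> binom_mass m p (S j) <= r * binom_mass m p j) ->
  prob_Y_ge_X_plus m p n q t <=
    r ^ L * prob_Y_ge_X_plus m p n q (t + INR L) + binom_lower_tail m p (T + INR L).
Proof.
  intros Hp Hq Hr HT Hratio.
  rewrite (prob_Y_ge_X_plus_rsum m p n q t (S m + L)) by lia.
  rewrite (prob_Y_ge_X_plus_rsum m p n q (t + INR L) (S m)) by lia.
  unfold binom_lower_tail.
  rewrite <- (rsum_pad (fun i => if Rlt_dec (INR i) (T + INR L) then binom_mass m p i else 0)
                (S m) (S m + L)); [|intros i Hi; rewrite binom_mass_out by lia; now destruct Rlt_dec|lia].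
  erewrite (rsum_eq (fun i => binom_mass m p i * binom_tail n q (INR i + (t + INR L)))).
  - apply (rsum_shift_le (binom_mass m p) (fun i => binom_tail n q (INR i + t))); try assumption.
    + intros i. apply binom_mass_nonneg, Hp.
    + intros i. apply binom_tail_bounds, Hq.
    + intros j Hj. apply (ratio_bound_iter _ r T Hr Hratio L j Hj).
  - intros k _. cbv beta.
    replace (INR k + (t + INR L)) with (INR (k + L) + t) by (rewrite plus_INR; ring).
    reflexivity.
Qed.

Lemma exists_nat_between l : 0 <= l -> exists L : nat, l < INR L <= l + 1.
Proof.
  intros Hl. destruct (archimed l) as [Hup Hup1].
  exists (Z.to_nat (up l)). rewrite INR_IZR_INZ, Z2Nat.id; [lra|].
  apply le_IZR. lra.
Qed.

Lemma binom_lower_tail_le_inv_sq m p d : 0 <= p <= 1 -> 0 < INR m * p -> 0 < d ->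
  6 * (INR m * p) * ln (INR m) <= d ^ 2 ->
  binom_lower_tail m p (INR m * p - d) <= 1 / INR m ^ 2.
Proof.
  intros Hp Hmu Hd Hdev.
  assert (Hm : 0 < INR m) by (destruct (Rle_lt_dec (INR m) 0); [nra|assumption]).
  eapply Rle_trans; [apply binom_lower_tail_le; assumption|].
  replace (1 / INR m ^ 2) with (exp (- (INR 2 * ln (INR m))))
    by (rewrite exp_Ropp, <- exp_pow, exp_ln by exact Hm; field; lra).
  apply exp_le_mono. simpl INR.
  apply Rmult_le_reg_r with (3 * (INR m * p)); [lra|].
  unfold Rdiv. rewrite Ropp_mult_distr_l, Rmult_assoc, Rinv_l by lra. lra.
Qed.

Lemma prob_Y_ge_X_plus_shift_estimates m n p q eps l :
  0 < p <= 2/3 -> 0 <= q <= 1 -> 0 < eps <= 1/8 ->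
  ln (INR m) <= INR m * p * eps ^ 2 -> 1 <= l <= INR m * p * eps ->
  prob_Y_ge_X_plus m p n q 0 * exp (- (80 * l * eps)) - 1 / INR m ^ 2
    <= prob_Y_ge_X_plus m p n q l
  /\ prob_Y_ge_X_plus m p n q (- l)
    <= prob_Y_ge_X_plus m p n q 0 * exp (80 * l * eps) + 1 / INR m ^ 2.
Proof.
  intros Hp Hq Heps Hln Hl. set (mu := INR m * p) in *.
  assert (Hp1 : 0 <= p <= 1) by lra.
  assert (Hmu : 0 < mu) by nra.
  destruct (exists_nat_between l) as [L HL]; [lra|].
  set (r := exp (40 * eps)). set (T := mu - 5 * mu * eps).
  assert (Hr : 1 + 40 * eps <= r) by apply exp_ineq1_le.
  assert (HT : 0 <= T) by (unfold T; nra).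
  assert (Hratio : forall j, T <= INR j -> binom_mass m p (S j) <= r * binom_mass m p j).
  { intros j Hj. apply (binom_mass_succ_le m p (5 * mu * eps)); fold mu; try lra.
    - split; nra.
    - assert ((1 + 40 * eps) * mu <= r * mu) by (apply Rmult_le_compat_r; lra). lra.
    - unfold T in Hj. lra. }
  assert (Htail : binom_lower_tail m p (T + INR L) <= 1 / INR m ^ 2).
  { replace (T + INR L) with (mu - (5 * mu * eps - INR L)) by (unfold T; ring).
    assert (Hd : 3 * mu * eps <= 5 * mu * eps - INR L) by lra.
    apply binom_lower_tail_le_inv_sq; fold mu; try lra; nra. }
  assert (HrL : r ^ L <= exp (80 * l * eps)) by (unfold r; rewrite exp_pow; apply exp_le_mono; nra).
  pose proof (prob_Y_ge_X_plus_shift_le m p n q 0 r T L Hp1 Hq ltac:(lra) HT Hratio) as Hlow.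
  pose proof (prob_Y_ge_X_plus_shift_le m p n q (- INR L) r T L Hp1 Hq ltac:(lra) HT Hratio) as Hup.
  rewrite Rplus_0_l in Hlow. replace (- INR L + INR L) with 0 in Hup by ring.
  pose proof (prob_Y_ge_X_plus_antitone m p n q l (INR L) Hp1 Hq ltac:(lra)).
  pose proof (prob_Y_ge_X_plus_antitone m p n q (- INR L) (- l) Hp1 Hq ltac:(lra)).
  set (P := prob_Y_ge_X_plus m p n q) in *.
  set (B := binom_lower_tail m p (T + INR L)) in *.
  set (E := exp (80 * l * eps)) in *.
  assert (HP0 : 0 <= P 0) by (apply prob_Y_ge_X_plus_nonneg; assumption).
  split.
  - set (Einv := exp (- (80 * l * eps))).
    assert (HEinv : 0 < Einv <= 1 /\ Einv * E = 1).
    { split; [split|].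
      - apply exp_pos.
      - rewrite <- exp_0. apply exp_le_mono. nra.
      - unfold Einv, E. rewrite <- exp_plus, Rplus_opp_l. apply exp_0. }
    assert (HPL : 0 <= P (INR L)) by (apply prob_Y_ge_X_plus_nonneg; assumption).
    assert (HB : 0 <= B).
    { apply rsum_nonneg; intros i _. destruct Rlt_dec; [apply binom_mass_nonneg, Hp1|lra]. }
    assert (P 0 * Einv <= Einv * r ^ L * P (INR L) + Einv * B)
      by (replace (Einv * r ^ L * P (INR L) + Einv * B) with ((r ^ L * P (INR L) + B) * Einv) by ring;
          apply Rmult_le_compat_r; lra).
    assert (Einv * r ^ L <= 1) by (rewrite <- (proj2 HEinv); apply Rmult_le_compat_l; lra).
    nra.
  - assert (r ^ L * P 0 <= E * P 0) by (apply Rmult_le_compat_r; assumption).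
    lra.
Qed.

Theorem proposition3p1 :
  exists Cst : R, 0 < Cst /\
  forall (m n : nat) (p q : R),
    (2 <= m)%nat -> 0 <= p <= 1 -> 0 <= q <= 1 ->
    INR m * p >= 64 * ln (INR m) -> p <= 2 / 3 ->
    forall l : R, 1 <= l <= sqrt (INR m * p * ln (INR m)) ->
      prob_Y_ge_X_plus m p n q l >=
        prob_Y_ge_X_plus m p n q 0
          * exp (- Cst * l * sqrt (ln (INR m) / (INR m * p)))
        - 2 / (INR m ^ 2)
      /\
      prob_Y_ge_X_plus m p n q (- l) <=
        prob_Y_ge_X_plus m p n q 0
          * exp (Cst * l * sqrt (ln (INR m) / (INR m * p)))
        + 2 / (INR m ^ 2).
Proof.
  exists 80. split; [lra|].
  intros m n p q Hm Hp Hq Hmu Hp23 l Hl.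
  assert (Hm2 : 2 <= INR m) by (replace 2 with (INR 2) by (simpl; ring); apply le_INR, Hm).
  assert (Hln : 0 < ln (INR m)) by (rewrite <- ln_1; apply ln_increasing; lra).
  assert (Hp0 : 0 < p) by nra.
  set (eps := sqrt (ln (INR m) / (INR m * p))).
  assert (Heps2 : eps ^ 2 = ln (INR m) / (INR m * p))
    by (apply pow2_sqrt, Rlt_le, Rdiv_lt_0_compat; nra).
  assert (Heps : 0 < eps) by (apply sqrt_lt_R0, Rdiv_lt_0_compat; nra).
  assert (Hmueps : INR m * p * eps ^ 2 = ln (INR m)) by (rewrite Heps2; field; nra).
  assert (Heps8 : eps <= 1/8).
  { assert (eps ^ 2 <= (1/8) ^ 2) by nra. nra. }
  assert (Hsqrt : sqrt (INR m * p * ln (INR m)) = INR m * p * eps).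
  { rewrite <- Hmueps, <- (sqrt_pow2 (INR m * p * eps)) by nra. f_equal. ring. }
  assert (Hinv : 1 / INR m ^ 2 <= 2 / INR m ^ 2).
  { apply Rmult_le_compat_r; [left; apply Rinv_0_lt_compat, pow_lt; lra|lra]. }
  destruct (prob_Y_ge_X_plus_shift_estimates m n p q eps l) as [Hlow Hup]; try lra.
  replace (Ropp 80 * l * eps) with (- (80 * l * eps)) by ring.
  split; lra.
Qed.
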